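(* Let $n\ge 3$, $0<m<\frac{n-2}{n}$, $\eta_0>0$, $\rho_1>0$, let $\beta$ satisfy $-\frac{\rho_1}{2}<\beta<\frac{m\rho_1}{n-2-nm}$, and let $\alpha=\frac{2\beta+\rho_1}{1-m}$. Let $r_0>0$ and let $f\in C^1([0,r_0);\mathbb{R})\cap C^2((0,r_0);\mathbb{R})$ be a radially symmetric solution in $B_{r_0}$ of $$(f^m/m)_{rr}+\frac{n-1}{r}(f^m/m)_r+\alpha f+\beta r f_r=0,\quad f>0,\quad 0<r<r_0,$$ with $f(0)=\eta_0$, $f_r(0)=0$. Then $f_r(r)<0$ for all $0<r<r_0$.
   Context: $B_R=\{x\in\mathbb{R}^n:|x|<R\}$; $r=|x|$ and $f_r$ is the radial derivative. *)

From Stdlib Require Import Reals.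
From Coquelicot Require Import Coquelicot.
Open Scope R_scope.

Definition fm_over_m (m : R) (f : R -> R) (r : R) : R := Rpower (f r) m / m.

From Stdlib Require Import Reals Lra Lia.
From Coquelicot Require Import Coquelicot.
Open Scope R_scope.

(* Write G = (f^m/m)_r = f^(m-1) f_r.  The equation says that the flux r^(n-1) G has
   derivative -r^(n-1) (alpha f + beta r f_r), which is negative near r = 0 because
   alpha f(0) > 0.  The flux vanishes at 0, so it is negative on some (0, delta), hence so
   is f_r.  At a first zero c of f_r we would have G(c) = 0 and G_r(c) = -alpha f(c) < 0,
   forcing G > 0, i.e. f_r > 0, just to the left of c. *)

Lemma at_right_0_iff (P : R -> Prop) :
  at_right 0 P <-> exists d, 0 < d /\ forall r, 0 < r < d -> P r.
Proof.
split.
- intros [d Hd]. exists d. split; [apply cond_pos|].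
  intros r Hr. apply Hd; [|lra].
  change (Rabs (r - 0) < d). rewrite Rminus_0_r, Rabs_pos_eq; lra.
- intros [d [Hd HP]]. exists (mkposreal d Hd). intros r Hr Hr0. apply HP. split; [lra|].
  change (Rabs (r - 0) < d) in Hr. rewrite Rminus_0_r, Rabs_pos_eq in Hr; lra.
Qed.

Lemma filterlim_eventually_lt {T : Type} {F : (T -> Prop) -> Prop} {FF : Filter F}
  (g : T -> R) (l y : R) :
  filterlim g F (locally l) -> l < y -> F (fun x => g x < y).
Proof. intros Hg Hl. exact (Hg _ (locally_open _ _ (open_lt y) (fun _ h => h) l Hl)). Qed.

Lemma filterlim_eventually_gt {T : Type} {F : (T -> Prop) -> Prop} {FF : Filter F}
  (g : T -> R) (l y : R) :
  filterlim g F (locally l) -> y < l -> F (fun x => y < g x).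
Proof. intros Hg Hl. exact (Hg _ (locally_open _ _ (open_gt y) (fun _ h => h) l Hl)). Qed.

Lemma filterlim_Rplus {T : Type} {F : (T -> Prop) -> Prop} {FF : Filter F}
  (g1 g2 : T -> R) (l1 l2 : R) :
  filterlim g1 F (locally l1) -> filterlim g2 F (locally l2) ->
  filterlim (fun x => g1 x + g2 x) F (locally (l1 + l2)).
Proof.
intros H1 H2. eapply filterlim_comp_2; [exact H1 | exact H2 |].
exact (filterlim_plus (V := R_NormedModule) l1 l2).
Qed.

Lemma filterlim_Rmult {T : Type} {F : (T -> Prop) -> Prop} {FF : Filter F}
  (g1 g2 : T -> R) (l1 l2 : R) :
  filterlim g1 F (locally l1) -> filterlim g2 F (locally l2) ->
  filterlim (fun x => g1 x * g2 x) F (locally (l1 * l2)).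
Proof.
intros H1 H2. eapply filterlim_comp_2; [exact H1 | exact H2 |].
exact (filterlim_mult (K := R_AbsRing) l1 l2).
Qed.

Lemma filterlim_at_right_id (x : R) : filterlim (fun r => r) (at_right x) (locally x).
Proof.
apply (filterlim_filter_le_1 (F := locally x)); [apply filter_le_within | apply filterlim_id].
Qed.

Lemma filterlim_right_0_of_right_derivative (f : R -> R) (l : R) :
  filterlim (fun h => (f h - f 0) / h) (at_right 0) (locally l) ->
  filterlim f (at_right 0) (locally (f 0)).
Proof.
intros Hq.
pose proof (filterlim_Rplus _ _ _ _ (filterlim_const (f 0))
               (filterlim_Rmult _ _ _ _ (filterlim_at_right_id 0) Hq)) as Hlim.
rewrite Rmult_0_l, Rplus_0_r in Hlim.
refine (filterlim_within_ext _ _ _ _ Hlim). intros h Hh. field. apply Rgt_not_eq, Hh.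
Qed.

Lemma is_derive_Rpower_l (y x : R) :
  0 < x -> is_derive (fun t => Rpower t y) x (y * Rpower x (y - 1)).
Proof. intros Hx. apply is_derive_Reals, derivable_pt_lim_power, Hx. Qed.

Lemma is_derive_fm_over_m (m : R) (f : R -> R) (a d : R) :
  m <> 0 -> 0 < f a -> is_derive f a d ->
  is_derive (fm_over_m m f) a (Rpower (f a) (m - 1) * d).
Proof.
intros Hm Hfa Hd. unfold fm_over_m.
pose proof (is_derive_comp _ f a _ _ (is_derive_Rpower_l m (f a) Hfa) Hd) as Hpow.
pose proof (is_derive_scal_l _ _ _ (/ m) Hpow) as Hdiv.
replace (Rpower (f a) (m - 1) * d) with (d * (m * Rpower (f a) (m - 1)) * / m)
  by (field; exact Hm).
exact Hdiv.
Qed.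

Lemma is_derive_pow_mult (k : nat) (g : R -> R) (a dg : R) :
  a <> 0 -> is_derive g a dg ->
  is_derive (fun t => t ^ k * g t) a (a ^ k * (dg + INR k / a * g a)).
Proof.
intros Ha Hg.
pose proof (is_derive_mult _ _ _ _ _
  (is_derive_pow _ k a 1 (is_derive_id a)) Hg Rmult_comm) as Hprod.
replace (a ^ k * (dg + INR k / a * g a))
  with (INR k * 1 * a ^ Nat.pred k * g a + a ^ k * dg).
- exact Hprod.
- destruct k as [|k]; simpl; field; exact Ha.
Qed.

Lemma decreasing_of_is_derive_neg (h dh : R -> R) (a b : R) :
  (forall x, a < x < b -> is_derive h x (dh x)) ->
  (forall x, a < x < b -> dh x < 0) ->
  forall x y, a < x -> x < y -> y < b -> h y < h x.
Proof.
intros Hh Hneg x y Hax Hxy Hyb.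
assert (Hincr := incr_function (fun t => - h t) a b (fun t => - dh t)).
assert (- h x < - h y); [|lra].
apply Hincr; simpl; auto.
- intros t Hat Htb. apply (is_derive_opp h), Hh. lra.
- intros t Hat Htb. specialize (Hneg t (conj Hat Htb)). lra.
Qed.

Lemma neg_of_decreasing_vanishing_right_0 (h : R -> R) (d : R) :
  (forall x y, 0 < x -> x < y -> y < d -> h y < h x) ->
  filterlim h (at_right 0) (locally 0) ->
  forall x, 0 < x < d -> h x < 0.
Proof.
intros Hdec Hlim x Hx.
assert (Hnpos : forall y, 0 < y < d -> h y <= 0).
{ intros y Hy. apply Rnot_lt_le. intros Hpos.
  destruct (proj1 (at_right_0_iff _) (filterlim_eventually_lt h 0 (h y) Hlim Hpos))
    as [e [He Hsmall]].
  set (z := Rmin e y / 2).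
  assert (0 < Rmin e y) by (apply Rmin_pos; lra).
  pose proof (Rmin_l e y). pose proof (Rmin_r e y).
  specialize (Hsmall z ltac:(unfold z; lra)).
  specialize (Hdec z y ltac:(unfold z; lra) ltac:(unfold z; lra) ltac:(lra)).
  lra. }
specialize (Hdec (x / 2) x ltac:(lra) ltac:(lra) ltac:(lra)).
specialize (Hnpos (x / 2) ltac:(lra)).
lra.
Qed.

Lemma is_derive_neg_zero_pos_left (g : R -> R) (c l a : R) :
  is_derive g c l -> l < 0 -> g c = 0 -> a < c ->
  exists t, a < t < c /\ 0 < g t.
Proof.
intros Hg Hl Hgc Hac.
destruct (proj1 (is_derive_Reals _ _ _) Hg (- l / 2) ltac:(lra)) as [e He].
assert (0 < Rmin e (c - a)) by (apply Rmin_pos; [apply cond_pos | lra]).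
pose proof (Rmin_l e (c - a)). pose proof (Rmin_r e (c - a)).
set (k := - Rmin e (c - a) / 2).
exists (c + k). split; [unfold k; lra|].
assert (Hk : Rabs k < e) by (rewrite Rabs_left; unfold k; lra).
specialize (He k ltac:(unfold k; lra) Hk).
rewrite Hgc in He. apply Rabs_lt_between in He.
set (q := (g (c + k) - 0) / k) in He.
replace (g (c + k)) with (q * k) by (unfold q; field; unfold k; lra).
assert (k < 0) by (unfold k; lra).
nra.
Qed.

Lemma locally_ball_R (x : R) (P : R -> Prop) :
  locally x P -> exists d, 0 < d /\ forall y, Rabs (y - x) < d -> P y.
Proof. intros [d Hd]. exists d. split; [apply cond_pos | exact Hd]. Qed.

Lemma continuous_nonpos_of_neg_left (g : R -> R) (c : R) :
  0 < c -> continuous g c -> (forall t, 0 < t < c -> g t < 0) -> g c <= 0.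
Proof.
intros Hc Hgc Hbefore. apply Rnot_lt_le. intros Hgt.
destruct (locally_ball_R _ _ (filterlim_eventually_gt g (g c) 0 Hgc Hgt))
  as [e [He Hnear]].
pose proof (Rmax_l (c / 2) (c - e / 2)). pose proof (Rmax_r (c / 2) (c - e / 2)).
set (t := Rmax (c / 2) (c - e / 2)) in *.
assert (t < c) by (apply Rmax_lub_lt; lra).
specialize (Hbefore t ltac:(lra)).
specialize (Hnear t ltac:(rewrite Rabs_left; lra)).
lra.
Qed.

Lemma exists_first_zero (g : R -> R) (b : R) :
  0 < b -> (forall t, 0 < t <= b -> continuous g t) ->
  at_right 0 (fun t => g t < 0) -> 0 <= g b ->
  exists c, 0 < c <= b /\ g c = 0 /\ forall t, 0 < t < c -> g t < 0.
Proof.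
intros Hb Hcont Hstart Hgb.
destruct (proj1 (at_right_0_iff _) Hstart) as [d [Hd Hneg]].
set (E := fun s => 0 < s <= b /\ forall t, 0 < t <= s -> g t < 0).
assert (HE : E (Rmin d b / 2)).
{ pose proof (Rmin_l d b). pose proof (Rmin_r d b).
  assert (0 < Rmin d b) by (apply Rmin_pos; lra).
  split; [lra|]. intros t Ht. apply Hneg. lra. }
assert (Hbound : bound E) by (exists b; intros s [Hs _]; lra).
destruct (completeness E Hbound (ex_intro _ _ HE)) as [c [Hub Hlub]].
assert (Hc0 : 0 < c).
{ pose proof (Hub _ HE). assert (0 < Rmin d b) by (apply Rmin_pos; lra). lra. }
assert (Hcb : c <= b) by (apply Hlub; intros s [Hs _]; lra).
assert (Hbefore : forall t, 0 < t < c -> g t < 0).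
{ intros t Ht. apply Rnot_le_lt. intros Hgt.
  assert (c <= t); [|lra].
  apply Hlub. intros s [Hs Hsneg]. apply Rnot_lt_le. intros Hts.
  specialize (Hsneg t ltac:(lra)). lra. }
pose proof (Hcont c (conj Hc0 Hcb)) as Hgc.
exists c. split; [lra|]. split; [|exact Hbefore].
destruct (continuous_nonpos_of_neg_left g c Hc0 Hgc Hbefore) as [Hlt | Heq];
  [exfalso | exact Heq].
destruct (locally_ball_R _ _ (filterlim_eventually_lt g (g c) 0 Hgc Hlt))
  as [e [He Hnear]].
assert (c < b) by (destruct (Req_dec c b); [subst; lra | lra]).
pose proof (Rmin_l b (c + e / 2)). pose proof (Rmin_r b (c + e / 2)).
set (s := Rmin b (c + e / 2)) in *.
assert (c < s) by (apply Rmin_glb_lt; lra).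
assert (E s); [|pose proof (Hub s ltac:(assumption)); lra].
split; [lra|]. intros t Ht.
destruct (Rlt_or_le t c); [apply Hbefore; lra|].
apply Hnear. rewrite Rabs_pos_eq; lra.
Qed.

Section RadialProfile.

Variables (n : nat) (m alpha beta r0 : R) (f f' : R -> R).

Hypothesis n_pos : (0 < n)%nat.
Hypothesis m_neq0 : m <> 0.
Hypothesis alpha_pos : 0 < alpha.
Hypothesis r0_pos : 0 < r0.
Hypothesis f_pos : forall r, 0 < r < r0 -> 0 < f r.
Hypothesis f_derive : forall r, 0 < r < r0 -> is_derive f r (f' r).
Hypothesis f'_ex_derive : forall r, 0 < r < r0 -> ex_derive f' r.
Hypothesis f_right_0 : filterlim f (at_right 0) (locally (f 0)).
Hypothesis f0_pos : 0 < f 0.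
Hypothesis f'_right_0 : filterlim f' (at_right 0) (locally 0).
Hypothesis radial_ode : forall r, 0 < r < r0 ->
  Derive (Derive (fm_over_m m f)) r + (INR n - 1) / r * Derive (fm_over_m m f) r
  + alpha * f r + beta * r * f' r = 0.

Definition pressure_gradient (r : R) : R := Rpower (f r) (m - 1) * f' r.

Definition pressure_flux (r : R) : R := r ^ (n - 1) * pressure_gradient r.

Definition ode_source (r : R) : R := alpha * f r + beta * r * f' r.

Lemma is_derive_pressure r :
  0 < r < r0 -> is_derive (fm_over_m m f) r (pressure_gradient r).
Proof. intros Hr. apply is_derive_fm_over_m; auto. Qed.

Lemma is_derive_pressure_gradient r : 0 < r < r0 ->
  is_derive pressure_gradient r (- ((INR n - 1) / r * pressure_gradient r) - ode_source r).
Proof.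
intros Hr.
assert (Hex : ex_derive pressure_gradient r).
{ destruct (f'_ex_derive r Hr) as [d2 Hd2]. eexists.
  apply (is_derive_mult (fun t => Rpower (f t) (m - 1)) f'); [|exact Hd2|exact Rmult_comm].
  apply (is_derive_comp (fun t => Rpower t (m - 1)) f).
  - apply is_derive_Rpower_l, f_pos, Hr.
  - apply f_derive, Hr. }
assert (Hsecond : Derive (Derive (fm_over_m m f)) r = Derive pressure_gradient r).
{ apply Derive_ext_loc, (locally_interval _ r 0 r0); try apply Hr.
  intros t Ht0 Htr0. apply is_derive_unique, is_derive_pressure. simpl in *; lra. }
pose proof (radial_ode r Hr) as Hode.
rewrite Hsecond, (is_derive_unique _ _ _ (is_derive_pressure r Hr)) in Hode.
replace (- ((INR n - 1) / r * pressure_gradient r) - ode_source r)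
  with (Derive pressure_gradient r) by (unfold ode_source; lra).
apply Derive_correct, Hex.
Qed.

Lemma is_derive_pressure_flux r : 0 < r < r0 ->
  is_derive pressure_flux r (- r ^ (n - 1) * ode_source r).
Proof.
intros Hr.
pose proof (is_derive_pow_mult (n - 1) _ r _ ltac:(lra) (is_derive_pressure_gradient r Hr))
  as Hflux.
rewrite minus_INR in Hflux by lia. simpl in Hflux.
replace (- r ^ (n - 1) * ode_source r) with
  (r ^ (n - 1) * (- ((INR n - 1) / r * pressure_gradient r) - ode_source r
                  + (INR n - 1) / r * pressure_gradient r)) by ring.
exact Hflux.
Qed.

Lemma pressure_flux_right_0 : filterlim pressure_flux (at_right 0) (locally 0).
Proof.
assert (Hpow : filterlim (fun r => r ^ (n - 1)) (at_right 0) (locally (0 ^ (n - 1)))).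
{ apply (filterlim_comp _ _ _ (fun r => r) (fun r => r ^ (n - 1)) _ (locally 0));
    [apply filterlim_at_right_id|].
  apply (ex_derive_continuous (fun r : R => r ^ (n - 1))).
  eexists. apply is_derive_pow, is_derive_id. }
assert (HRpower : filterlim (fun r => Rpower (f r) (m - 1)) (at_right 0)
                    (locally (Rpower (f 0) (m - 1)))).
{ apply (filterlim_comp _ _ _ f (fun x => Rpower x (m - 1)) _ (locally (f 0)));
    [exact f_right_0|].
  apply (ex_derive_continuous (fun x : R => Rpower x (m - 1))).
  eexists. apply is_derive_Rpower_l, f0_pos. }
pose proof (filterlim_Rmult _ _ _ _ Hpow (filterlim_Rmult _ _ _ _ HRpower f'_right_0))
  as Hlim.
rewrite !Rmult_0_r in Hlim. exact Hlim.
Qed.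

Lemma ode_source_pos_right_0 : at_right 0 (fun r => 0 < ode_source r).
Proof.
apply (filterlim_eventually_gt _ (alpha * f 0 + beta * 0 * 0)).
- apply filterlim_Rplus.
  + apply filterlim_Rmult; [apply filterlim_const | exact f_right_0].
  + apply filterlim_Rmult; [|exact f'_right_0].
    apply filterlim_Rmult; [apply filterlim_const | apply filterlim_at_right_id].
- pose proof (Rmult_lt_0_compat _ _ alpha_pos f0_pos). lra.
Qed.

Lemma f'_neg_right_0 : at_right 0 (fun r => f' r < 0).
Proof.
destruct (proj1 (at_right_0_iff _) ode_source_pos_right_0) as [d [Hd Hsource]].
pose proof (Rmin_l d r0). pose proof (Rmin_r d r0).
assert (Hd' : 0 < Rmin d r0) by (apply Rmin_pos; lra).
assert (Hdec : forall x y, 0 < x -> x < y -> y < Rmin d r0 ->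
                 pressure_flux y < pressure_flux x).
{ apply (decreasing_of_is_derive_neg _ (fun r => - r ^ (n - 1) * ode_source r)).
  - intros r Hr. apply is_derive_pressure_flux. lra.
  - intros r Hr. pose proof (pow_lt r (n - 1) ltac:(lra)).
    pose proof (Hsource r ltac:(lra)). nra. }
apply at_right_0_iff. exists (Rmin d r0). split; [exact Hd'|]. intros r Hr.
pose proof (neg_of_decreasing_vanishing_right_0 _ _ Hdec pressure_flux_right_0 r Hr)
  as Hflux.
unfold pressure_flux, pressure_gradient in Hflux.
pose proof (pow_lt r (n - 1) ltac:(lra)).
assert (0 < Rpower (f r) (m - 1)) by apply exp_pos.
apply Rnot_le_lt. intros Hf'.
assert (0 <= r ^ (n - 1) * (Rpower (f r) (m - 1) * f' r)); [|lra].
apply Rmult_le_pos; [lra | apply Rmult_le_pos; lra].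
Qed.

Lemma pressure_gradient_pos_left r : 0 < r < r0 -> f' r = 0 ->
  exists t, 0 < t < r /\ 0 < pressure_gradient t.
Proof.
intros Hr Hf'r.
apply (is_derive_neg_zero_pos_left _ r (- (alpha * f r))); try apply Hr.
- replace (- (alpha * f r)) with (- ((INR n - 1) / r * pressure_gradient r) - ode_source r).
  + apply is_derive_pressure_gradient, Hr.
  + unfold pressure_gradient, ode_source. rewrite Hf'r. field. lra.
- pose proof (Rmult_lt_0_compat _ _ alpha_pos (f_pos r Hr)). lra.
- unfold pressure_gradient. rewrite Hf'r. ring.
Qed.

Theorem f'_neg r : 0 < r < r0 -> f' r < 0.
Proof.
intros Hr. apply Rnot_le_lt. intros Hf'r.
destruct (exists_first_zero f' r ltac:(lra)
            (fun t Ht => ex_derive_continuous _ _ (f'_ex_derive t ltac:(lra)))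
            f'_neg_right_0 Hf'r) as [c [Hc [Hzero Hbefore]]].
destruct (pressure_gradient_pos_left c ltac:(lra) Hzero) as [t [Ht Hpos]].
specialize (Hbefore t Ht).
unfold pressure_gradient in Hpos.
assert (0 < Rpower (f t) (m - 1)) by apply exp_pos.
nra.
Qed.

End RadialProfile.

Theorem lemma2p2
  (n : nat) (m eta0 rho1 beta r0 : R) (f f' : R -> R)
  (Hn : (3 <= n)%nat)
  (Hm0 : 0 < m) (Hm1 : m < (INR n - 2) / INR n)
  (Heta0 : 0 < eta0) (Hrho1 : 0 < rho1)
  (Hbeta1 : - rho1 / 2 < beta)
  (Hbeta2 : beta < m * rho1 / (INR n - 2 - INR n * m))
  (Hr0 : 0 < r0)
  (* f in C^1([0,r0)) : f' is its derivative on (0,r0), its right derivative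
     at 0, and f' is continuous on [0,r0) (right-continuous at 0) *)
  (Hder : forall r, 0 < r < r0 -> is_derive f r (f' r))
  (Hder0 : filterlim (fun h => (f h - f 0) / h) (at_right 0) (locally (f' 0)))
  (Hcont' : forall r, 0 < r < r0 -> continuous f' r)
  (Hcont'0 : filterlim f' (at_right 0) (locally (f' 0)))
  (* f in C^2((0,r0)) *)
  (HC2 : forall r, 0 < r < r0 -> ex_derive f' r /\ continuous (Derive f') r)
  (* positivity and the ODE on (0,r0), with alpha = (2 beta + rho1)/(1-m) *)
  (Hpos : forall r, 0 < r < r0 -> 0 < f r)
  (Hode : forall r, 0 < r < r0 ->
     Derive (Derive (fm_over_m m f)) r
     + (INR n - 1) / r * Derive (fm_over_m m f) r
     + (2 * beta + rho1) / (1 - m) * f r + beta * r * f' r = 0)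
  (Hf0 : f 0 = eta0) (Hf'0 : f' 0 = 0) :
  forall r, 0 < r < r0 -> f' r < 0.
Proof.
assert (Hn_real : INR 3 <= INR n) by (apply le_INR; exact Hn).
simpl in Hn_real.
assert (Hm_lt1 : m < 1).
{ apply (Rlt_le_trans _ _ _ Hm1), (Rmult_le_reg_r (INR n)); [lra|].
  unfold Rdiv. rewrite Rmult_assoc, Rinv_l; lra. }
assert (Halpha : 0 < (2 * beta + rho1) / (1 - m)) by (apply Rdiv_lt_0_compat; lra).
apply (f'_neg n m ((2 * beta + rho1) / (1 - m)) beta r0 f f'); try assumption.
- lia.
- lra.
- intros r Hr. apply HC2, Hr.
- exact (filterlim_right_0_of_right_derivative f _ Hder0).
- lra.
- rewrite Hf'0 in Hcont'0. exact Hcont'0.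
Qed.
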